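(* In the free group $\mathbb{F}_2$ on $a,b$, set $a_0:=b^{-1}$, $b_0:=aba^{-1}$ and recursively $a_n:=a_{n-1}b_{n-1}$, $b_n:=a_{n-1}^{-1}b_{n-1}^{-1}$ for $n\ge1$. Let $\sigma,\tau\in\mathrm{Aut}(\mathbb{F}_2)$ be defined by $\sigma(a)=a^{-1},\sigma(b)=b^{-1}$ and $\tau(a)=a,\tau(b)=b^{-1}$. Let $n\in\mathbb{N}$. Then: (1) if $n\equiv0\pmod3$, then $a\,\sigma(a_n)\,a^{-1}=b_n$ (and so $a_n=a\,\sigma(b_n)\,a^{-1}$); (2) if $n\equiv1\pmod3$, then $\tau(a_n)=b_n$ (and so $\tau(b_n)=a_n$); (3) if $n\equiv2\pmod3$, then $\tau(a_n)=b_n^{-1}$. *)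

(* The free group F_2 on {a, b}, realized as
   words over the alphabet {a, a^-1, b, b^-1} modulo free reduction. *)
From mathcomp Require Import all_boot.
Set Implicit Arguments. Unset Strict Implicit. Unset Printing Implicit Defensive.

(* A letter (g, e): g = false for a, g = true for b; e = true means inverse. *)
Definition letter := (bool * bool)%type.
Definition la  : letter := (false, false).
Definition lai : letter := (false, true).
Definition lb  : letter := (true, false).
Definition lbi : letter := (true, true).

Definition word := seq letter.

Definition inv_letter (x : letter) : letter := (x.1, ~~ x.2).

Definition push (x : letter) (s : word) : word :=
  match s with
  | y :: s' => if y == inv_letter x then s' else x :: s
  | [::] => [:: x]
  end.

Definition reduce (w : word) : word := foldr push [::] w.

Definition eqF2 (u v : word) : Prop := reduce u = reduce v.

Definition wmul (u v : word) : word := u ++ v.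
Definition winv (u : word) : word := rev (map inv_letter u).

Definition ga : word := [:: la].
Definition gb : word := [:: lb].

Definition hom (fa fb : word) (w : word) : word :=
  flatten (map (fun x : letter =>
     let img := if x.1 then fb else fa in
     if x.2 then winv img else img) w).

Definition sigma (w : word) : word := hom (winv ga) (winv gb) w.
Definition tau (w : word) : word := hom ga (winv gb) w.

Fixpoint ab (n : nat) : word * word :=
  match n with
  | 0 => (winv gb, wmul ga (wmul gb (winv ga)))
  | n'.+1 => let (a', b') := ab n' in (wmul a' b', wmul (winv a') (winv b'))
  end.

Definition an (n : nat) : word := (ab n).1.
Definition bn (n : nat) : word := (ab n).2.

(* Write x = a_n and y = b_n.  Three steps of the recursion give
   a_(n+3) = x y x^-1 y^-2 x^-1 y x, and b_(n+3) is the same word with x and y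
   exchanged.  So an endomorphism of F_2 exchanging a_n and b_n also exchanges
   a_(n+3) and b_(n+3); parts (1) and (2) follow by induction from n = 0 and
   n = 1, since w |-> a sigma(w) a^-1 is itself the endomorphism sending a, b to
   a sigma(a) a^-1, a sigma(b) a^-1.  For (3), if tau exchanges a_n and b_n then
   tau(a_(n+1)) = tau(a_n) tau(b_n) = b_n a_n = b_(n+1)^-1. *)
From mathcomp Require Import all_boot.

Set Implicit Arguments.
Unset Strict Implicit.
Unset Printing Implicit Defensive.

Definition reduced (s : word) : bool :=
  sorted (fun x y : letter => y != inv_letter x) s.

Lemma inv_letterK : involutive inv_letter.
Proof. by case=> g e; rewrite /inv_letter /= negbK. Qed.

Lemma push_reduced x s : reduced s -> reduced (push x s).
Proof.
case: s => [|y s] //= s_red.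
case: eqP => [_|/eqP y_neq]; first exact: path_sorted s_red.
by rewrite /reduced /= y_neq s_red.
Qed.

Lemma foldr_push_reduced t u : reduced t -> reduced (foldr push t u).
Proof. by move=> t_red; elim: u => //= x u IHu; apply: push_reduced. Qed.

Lemma reduce_reduced w : reduced (reduce w).
Proof. exact: foldr_push_reduced. Qed.

Lemma push_invK x s : reduced s -> push x (push (inv_letter x) s) = s.
Proof.
case: s => [|y s] /= s_red; first by rewrite eqxx.
case: (y =P inv_letter (inv_letter x)) => [|_]; last by rewrite /= eqxx.
rewrite inv_letterK => y_x; subst y.
by case: s s_red => [|z s] //= /andP[/negbTE ->].
Qed.

Lemma foldr_push_push t x r : reduced t ->
  foldr push t (push x r) = push x (foldr push t r).
Proof.
move=> t_red; case: r => [|y r] //=.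
case: eqP => [->|_] //.
by rewrite push_invK // foldr_push_reduced.
Qed.

Lemma foldr_push_reduce t u : reduced t ->
  foldr push t u = foldr push t (reduce u).
Proof. by move=> t_red; elim: u => //= x u ->; rewrite foldr_push_push. Qed.

Lemma reduce_cat u v : reduce (u ++ v) = foldr push (reduce v) (reduce u).
Proof.
by rewrite /reduce foldr_cat -/(reduce v) -foldr_push_reduce ?reduce_reduced.
Qed.

Lemma eqF2_cat u u' v v' : eqF2 u u' -> eqF2 v v' -> eqF2 (u ++ v) (u' ++ v').
Proof. by rewrite /eqF2 !reduce_cat => -> ->. Qed.

Lemma eqF2_cat1 u w v : eqF2 w [::] -> eqF2 (u ++ w ++ v) (u ++ v).
Proof. by move=> w_eq1; rewrite /eqF2 !(reduce_cat u) reduce_cat w_eq1. Qed.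

Lemma winv_cat u v : winv (u ++ v) = winv v ++ winv u.
Proof. by rewrite /winv map_cat rev_cat. Qed.

Lemma winvK : involutive winv.
Proof.
move=> u; rewrite /winv map_rev revK -map_comp.
by rewrite map_id_in // => x _ /=; rewrite inv_letterK.
Qed.

Lemma eqF2_catV u : eqF2 (u ++ winv u) [::].
Proof.
elim: u => // x u IHu.
rewrite /eqF2 /winv /= rev_cons -cats1 -/(winv u) catA reduce_cat IHu /=.
by rewrite eqxx.
Qed.

Lemma eqF2_Vcat u : eqF2 (winv u ++ u) [::].
Proof. by have := eqF2_catV (winv u); rewrite winvK. Qed.

Lemma eqF2_winv u v : eqF2 u v -> eqF2 (winv u) (winv v).
Proof.
move=> eq_uv; have uVv_eq1 : eqF2 (u ++ winv v) [::].
  by rewrite /eqF2 reduce_cat eq_uv -reduce_cat eqF2_catV.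
transitivity (reduce (winv u ++ (u ++ winv v))).
  by rewrite -[in LHS](cats0 (winv u)) 2!reduce_cat uVv_eq1.
by rewrite catA reduce_cat eqF2_Vcat.
Qed.

Lemma hom_cat fa fb u v : hom fa fb (u ++ v) = hom fa fb u ++ hom fa fb v.
Proof. by rewrite /hom map_cat flatten_cat. Qed.

Lemma hom_winv fa fb u : hom fa fb (winv u) = winv (hom fa fb u).
Proof.
elim: u => // x u IHu.
rewrite -cat1s winv_cat !hom_cat IHu winv_cat; congr (_ ++ _).
by case: x => [[] []]; rewrite /hom /= ?cats0 ?winvK.
Qed.

Lemma hom_conj g fa fb w :
  eqF2 (g ++ hom fa fb w ++ winv g)
       (hom (g ++ fa ++ winv g) (g ++ fb ++ winv g) w).
Proof.
elim: w => [|x w IHw]; first exact: eqF2_catV.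
have hom_x : hom (g ++ fa ++ winv g) (g ++ fb ++ winv g) [:: x]
           = g ++ hom fa fb [:: x] ++ winv g.
  by case: x => [[] []]; rewrite /hom /= ?cats0 ?winv_cat ?winvK -?catA.
rewrite -cat1s !hom_cat hom_x /eqF2 [in RHS]reduce_cat -IHw -reduce_cat -!catA.
by rewrite (catA (winv g) g) !(catA g) (eqF2_cat1 _ _ (eqF2_Vcat g)).
Qed.

Lemma anS n : an n.+1 = an n ++ bn n.
Proof. by rewrite /an /bn /=; case: (ab n). Qed.

Lemma bnS n : bn n.+1 = winv (an n) ++ winv (bn n).
Proof. by rewrite /an /bn /=; case: (ab n). Qed.

Definition step3 (x y : word) : word :=
  x ++ y ++ winv x ++ winv y ++ winv y ++ winv x ++ y ++ x.

Lemma an_add3 n : an n.+3 = step3 (an n) (bn n).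
Proof. by rewrite /step3 !(anS, bnS) !winv_cat !winvK -!catA. Qed.

Lemma bn_add3 n : bn n.+3 = step3 (bn n) (an n).
Proof. by rewrite /step3 !(anS, bnS) !winv_cat !winvK -!catA. Qed.

Lemma hom_step3 fa fb x y :
  hom fa fb (step3 x y) = step3 (hom fa fb x) (hom fa fb y).
Proof. by rewrite /step3 !hom_cat !hom_winv. Qed.

Lemma eqF2_step3 x x' y y' :
  eqF2 x x' -> eqF2 y y' -> eqF2 (step3 x y) (step3 x' y').
Proof.
move=> eq_x eq_y; have eqV_x := eqF2_winv eq_x; have eqV_y := eqF2_winv eq_y.
by do 7 apply: eqF2_cat => //.
Qed.

Definition swaps_ab (f : word -> word) (n : nat) : Prop :=
  eqF2 (f (an n)) (bn n) /\ eqF2 (f (bn n)) (an n).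

Lemma hom_swaps_ab_add3 fa fb n :
  swaps_ab (hom fa fb) n -> swaps_ab (hom fa fb) n.+3.
Proof.
by case=> eq_a eq_b; rewrite /swaps_ab an_add3 bn_add3 !hom_step3;
  split; apply: eqF2_step3.
Qed.

Lemma hom_swaps_ab_mod3 fa fb r n : n %% 3 = r ->
  swaps_ab (hom fa fb) r -> swaps_ab (hom fa fb) n.
Proof.
move=> n_mod3 swaps_r; rewrite (divn_eq n 3) n_mod3.
elim: (n %/ 3) => // k IHk.
by rewrite mulSnr addnAC addn3; exact: hom_swaps_ab_add3.
Qed.

Lemma hom_an_succ fa fb n : swaps_ab (hom fa fb) n ->
  eqF2 (hom fa fb (an n.+1)) (winv (bn n.+1)).
Proof.
case=> eq_a eq_b; rewrite anS bnS winv_cat !winvK hom_cat.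
exact: eqF2_cat.
Qed.

Lemma tau_swaps_ab n : n %% 3 = 1 -> swaps_ab tau n.
Proof. by move/hom_swaps_ab_mod3; apply; split. Qed.

Lemma conj_sigma_swaps_ab n : n %% 3 = 0 ->
  swaps_ab (fun w => ga ++ sigma w ++ winv ga) n.
Proof.
move/(@hom_swaps_ab_mod3 (ga ++ winv ga ++ winv ga) (ga ++ winv gb ++ winv ga)).
by rewrite /swaps_ab /eqF2 /sigma !hom_conj; apply; split.
Qed.

Theorem lemma2p3 (n : nat) :
  (n %% 3 = 0 ->
     eqF2 (wmul ga (wmul (sigma (an n)) (winv ga))) (bn n) /\
     eqF2 (an n) (wmul ga (wmul (sigma (bn n)) (winv ga)))) /\
  (n %% 3 = 1 ->
     eqF2 (tau (an n)) (bn n) /\ eqF2 (tau (bn n)) (an n)) /\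
  (n %% 3 = 2 ->
     eqF2 (tau (an n)) (winv (bn n))).
Proof.
split; [|split] => n_mod3.
- by case: (conj_sigma_swaps_ab n_mod3) => ? /esym.
- exact: tau_swaps_ab.
rewrite (divn_eq n 3) n_mod3 addn2.
by apply: hom_an_succ; apply: tau_swaps_ab; rewrite -addn1 modnMDl.
Qed.
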